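(* Let $K$ be a field of characteristic $p>0$, let $a\in K^{{\mathbb N}}$ be a simple nondegenerate $K$-recurrence sequence, let $q$ be a power of $p$, and let $r,s\in{\mathbb Q}$. If $\{r+sq^n\mid n\ge m\}\subseteq{\mathcal Z}(a)$ for some $m\in{\mathbb N}$, then $\{r+sq^n\mid n\in{\mathbb N}\}\cap{\mathbb N}\subseteq{\mathcal Z}(a)$.
   Context: ${\mathbb N}=\{0,1,2,\dots\}$, ${\mathcal Z}(a)=\{n\in{\mathbb N}\mid a(n)=0\}$. The minimum polynomial $P_a$ is the monic generator of $\{P\in K[E]\mid P(E)a=0\}$, $(Ea)(n)=a(n+1)$. $a$ is simple if $P_a$ has distinct roots and nondegenerate if its roots are nonzero and no quotient of two distinct roots is a root of unity. *)

From HB Require Import structures.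
From mathcomp Require Import all_boot all_order all_algebra.
Set Implicit Arguments. Unset Strict Implicit. Unset Printing Implicit Defensive.
Import Order.TTheory GRing.Theory Num.Theory.
Local Open Scope ring_scope.

(* (P(E) a)(n) = \sum_i P_i a(n+i), where (E a)(n) = a(n+1). *)
Definition shift_apply (K : fieldType) (P : {poly K}) (a : nat -> K) (n : nat) : K :=
  \sum_(i < size P) P`_i * a (n + i)%N.

Definition annihilates (K : fieldType) (P : {poly K}) (a : nat -> K) : Prop :=
  forall n, shift_apply P a n = 0.

Definition is_min_poly (K : fieldType) (a : nat -> K) (P : {poly K}) : Prop :=
  [/\ P \is monic, annihilates P a & forall Q, annihilates Q a -> P %| Q].

Definition recurrence_seq (K : fieldType) (a : nat -> K) : Prop :=
  exists P : {poly K}, P != 0 /\ annihilates P a.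

(* Roots of P are taken in arbitrary field extensions (equivalently, in an
   algebraic closure of K). *)
Definition distinct_roots (K : fieldType) (P : {poly K}) : Prop :=
  forall (L : fieldType) (f : {rmorphism K -> L}) (x : L),
    ~~ (('X - x%:P) ^+ 2 %| map_poly f P).

Definition nondegenerate_roots (K : fieldType) (P : {poly K}) : Prop :=
  forall (L : fieldType) (f : {rmorphism K -> L}) (x y : L),
    root (map_poly f P) x -> root (map_poly f P) y ->
    x != 0 /\ (x != y -> forall n : nat, (0 < n)%N -> (x / y) ^+ n != 1).

Definition simple_seq (K : fieldType) (a : nat -> K) : Prop :=
  exists P, is_min_poly a P /\ distinct_roots P.

Definition nondegenerate_seq (K : fieldType) (a : nat -> K) : Prop :=
  exists P, is_min_poly a P /\ nondegenerate_roots P.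

From HB Require Import structures.
From mathcomp Require Import all_boot all_order all_algebra.
From mathcomp Require Import separable qfpoly.
From mathcomp Require Import ring.
From Stdlib Require Import Classical.
Set Implicit Arguments. Unset Strict Implicit. Unset Printing Implicit Defensive.
Import Order.TTheory GRing.Theory Num.Theory.
Local Open Scope ring_scope.

(* Let P be the minimum polynomial of a, of degree d: it is separable and
   coprime to X.  Writing w_u for the coordinates of X^u mod P, one has
   a u = w_u . (a 0, ..., a (d-1)).  The exponents e_j = r + s q^(n+j) are
   natural numbers satisfying e_(j+1) + q e_0 = q e_j + e_1, and since
   (X^u mod P)^q is obtained by applying the Frobenius x |-> x^q to the
   coefficients and substituting X^q, this becomes w_(e_(j+1)) D = F(w_(e_j)) C
   with D, C invertible: C is injective because a separable polynomial dividing
   u^q divides u.  Consequently the windows (w_(e_j), ..., w_(e_(j+N-1))) all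
   have the same rank; taking N where the rank stops growing, their row spaces
   are equal for all j, so w_(e_0) lies in the span of a tail on which the
   pairing with the initial values vanishes. *)

Section PcharPow.
Variables (R : comNzRingType) (q : nat).
Hypothesis hq : [pchar R].-nat q.

(* The proof argument is unused; it lets the ring morphism instances below
   depend on [hq]. *)
Definition pchar_pow (_ : [pchar R].-nat q) (x : R) := x ^+ q.

Lemma pchar_pow_gt0 : (0 < q)%N.
Proof. by case/andP: hq. Qed.

Lemma pchar_pow_nmod : nmod_morphism (pchar_pow hq).
Proof.
split=> [|x y]; rewrite /pchar_pow; last exact: exprDn_pchar.
by rewrite expr0n gtn_eqF ?pchar_pow_gt0.
Qed.

Lemma pchar_pow_monoid : monoid_morphism (pchar_pow hq).
Proof. by split=> [|x y]; rewrite /pchar_pow ?expr1n ?exprMn. Qed.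

HB.instance Definition _ :=
  GRing.isNmodMorphism.Build R R (pchar_pow hq) pchar_pow_nmod.
HB.instance Definition _ :=
  GRing.isMonoidMorphism.Build R R (pchar_pow hq) pchar_pow_monoid.

Lemma pchar_pow_poly (u : {poly R}) : u ^+ q = map_poly (pchar_pow hq) u \Po 'X^q.
Proof.
have hqX : [pchar {poly R}].-nat q by rewrite (eq_pnat _ (pchar_poly R)).
elim/poly_ind: u => [|u c IHu].
  by rewrite rmorph0 comp_poly0 expr0n gtn_eqF ?pchar_pow_gt0.
rewrite (exprDn_pchar _ _ hqX) exprMn -polyC_exp IHu rmorphD rmorphM /=.
rewrite map_polyX map_polyC.
by rewrite comp_polyD comp_polyM comp_polyX comp_polyC.
Qed.

End PcharPow.

Lemma pchar_nat_exp (R : nzRingType) p k :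
  p \in [pchar R] -> [pchar R].-nat (p ^ k)%N.
Proof. by move=> hp; rewrite pnatX pnatE ?(pcharf_prime hp) ?hp. Qed.

Lemma separable_dvdp_exp (K : fieldType) (S g : {poly K}) n :
  separable_poly S -> S %| g ^+ n.+1 -> S %| g.
Proof.
move=> S_sep S_gn; set u := gcdp S g; set v := S %/ u.
have Suv : S = v * u by rewrite divpK ?dvdp_gcdl.
have uv_coprime : coprimep u v by apply: (separable_coprime S_sep); rewrite mulrC -Suv.
have vg_coprime : coprimep v g.
  apply/coprimepP => e ev eg; move/coprimepP: uv_coprime; apply => //.
  by rewrite dvdp_gcd eg (dvdp_trans ev) // Suv dvdp_mulr.
have v_unit : v %= 1.
  move/coprimepP: (coprimep_expr n.+1 vg_coprime); apply => //.
  by apply: dvdp_trans S_gn; rewrite Suv dvdp_mulr.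
by rewrite Suv -[g]mul1r dvdp_mul ?dvdp_gcdr //; case/andP: v_unit.
Qed.

Lemma ex_monic_irreducible_dvdp (K : fieldType) (g : {poly K}) :
  (1 < size g)%N -> exists2 Q : {poly K}, monic_irreducible_poly Q & Q %| g.
Proof.
have [n] := ubnP (size g); elim: n g => // n IHn g lt_g_n g_gt1.
have g0 : g != 0 by rewrite -size_poly_gt0 ltnW.
have [[h /andP[h_gt1 lt_h_g] hg] | no_factor] :=
  classic (exists2 h : {poly K}, (1 < size h < size g)%N & h %| g).
  have [Q irrQ Qh] := IHn h (leq_trans lt_h_g lt_g_n) h_gt1.
  by exists Q => //; exact: dvdp_trans Qh hg.
have lc_g0 : (lead_coef g)^-1 != 0 by rewrite invr_eq0 lead_coef_eq0.
exists ((lead_coef g)^-1 *: g); last by rewrite dvdpZl.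
split; last by rewrite monicE lead_coefZ mulVf ?lead_coef_eq0.
split=> [|h h_n1]; first by rewrite size_scale.
rewrite dvdpZr // => hg; apply: eqp_trans (_ : h %= g) _; last first.
  by rewrite eqp_sym eqp_scale.
have h0 : h != 0 by apply: contraNneq g0 => h0; rewrite -dvd0p -h0.
rewrite -dvdp_size_eqp // eqn_leq dvdp_leq //= leqNgt; apply/negP => lt_h_g.
apply: no_factor; exists h => //; rewrite lt_h_g andbT ltn_neqAle eq_sym h_n1.
by rewrite size_poly_gt0.
Qed.

Lemma double_root_dvdp (L : fieldType) (R : {poly L}) x :
  root R x -> root R^`() x -> ('X - x%:P) ^+ 2 %| R.
Proof.
case/factor_theorem => S ->.
rewrite derivM derivXsubC mulr1 rootE !hornerE subrr mulr0 add0r.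
by case/factor_theorem => S2 ->; rewrite -mulrA -expr2 dvdp_mull.
Qed.

Lemma dvdp_root_qX (K : fieldType) (Q h : {poly K})
    (Q_irr : monic_irreducible_poly Q) :
  Q %| h -> root (map_poly (qpolyC Q : K -> {poly %/ Q with Q_irr}) h) 'qX.
Proof.
rewrite dvdpE rootE -in_qpoly_comp_horner comp_polyXr => /eqP Qh.
by apply/eqP/val_inj; rewrite /= (mk_monicE Q_irr).
Qed.

Lemma separable_of_distinct_roots (K : fieldType) (P : {poly K}) :
  distinct_roots P -> separable_poly P.
Proof.
move=> P_simple; rewrite unlock /coprimep; apply: contraT => gcd_n1.
have P0 : P != 0.
  by apply: contraNneq (P_simple K idfun 0) => ->; rewrite map_poly0 dvdp0.
have gcd_gt1 : (1 < size (gcdp P P^`()))%N.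
  by rewrite ltn_neqAle eq_sym gcd_n1 size_poly_gt0 gcdp_eq0 negb_and P0.
have [Q Q_irr Q_gcd] := ex_monic_irreducible_dvdp gcd_gt1.
case/negP: (P_simple _ (qpolyC Q : {rmorphism K -> {poly %/ Q with Q_irr}}) 'qX).
apply: double_root_dvdp; rewrite ?deriv_map; apply: dvdp_root_qX.
  exact: dvdp_trans Q_gcd (dvdp_gcdl _ _).
exact: dvdp_trans Q_gcd (dvdp_gcdr _ _).
Qed.

Lemma min_poly_unique (K : fieldType) (a : nat -> K) P Q :
  is_min_poly a P -> is_min_poly a Q -> P = Q.
Proof.
case=> P_monic Pa P_min [Q_monic Qa Q_min]; apply/eqP.
by rewrite -eqp_monic // /eqp P_min ?Q_min.
Qed.

Lemma nondegenerate_coprimepX (K : fieldType) (P : {poly K}) :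
  nondegenerate_roots P -> coprimep P 'X.
Proof.
move=> P_nondeg; have := coprimep_XsubC P 0; rewrite subr0 => ->.
apply/negP => P_root0.
by have [] := P_nondeg K idfun 0 0; rewrite ?map_poly_id ?eqxx.
Qed.

Section SeqPairing.
Variable K : fieldType.
Implicit Types (a : nat -> K) (g h : {poly K}).

Definition seq_pairing a h := \sum_(i < size h) h`_i * a i.

Lemma seq_pairing_wide a h N : (size h <= N)%N ->
  seq_pairing a h = \sum_(i < N) h`_i * a i.
Proof.
move=> le_h_N; rewrite /seq_pairing (big_ord_widen N (fun i => h`_i * a i) le_h_N).
rewrite big_mkcond /=; apply: eq_bigr => i _.
by case: ltnP => // le_h_i; rewrite nth_default ?mul0r.
Qed.

Lemma seq_pairing0 a : seq_pairing a 0 = 0.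
Proof. by rewrite /seq_pairing size_poly0 big_ord0. Qed.

Lemma seq_pairingD a g h :
  seq_pairing a (g + h) = seq_pairing a g + seq_pairing a h.
Proof.
pose N := maxn (size g) (size h).
rewrite !(@seq_pairing_wide _ _ N) ?leq_maxl ?leq_maxr ?size_polyD // -big_split.
by apply: eq_bigr => i _; rewrite coefD mulrDl.
Qed.

Lemma seq_pairingZ a c h : seq_pairing a (c *: h) = c * seq_pairing a h.
Proof.
rewrite (@seq_pairing_wide _ _ (size h)) ?size_scale_leq // mulr_sumr.
by apply: eq_bigr => i _; rewrite coefZ mulrA.
Qed.

Lemma seq_pairing_mulX a h :
  seq_pairing a ('X * h) = seq_pairing (fun i => a i.+1) h.
Proof.
have size_Xh : (size ('X * h)%R <= (size h).+1)%N.
  by rewrite (leq_trans (size_polyMleq _ _)) // size_polyX.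
rewrite (seq_pairing_wide _ size_Xh) big_ord_recl coefXM mul0r add0r.
by apply: eq_bigr => i _; rewrite coefXM.
Qed.

Lemma seq_pairing_Xn a n : seq_pairing a 'X^n = a n.
Proof.
rewrite /seq_pairing size_polyXn big_ord_recr /= coefXn eqxx mul1r big1 ?add0r //.
by move=> i _; rewrite coefXn ltn_eqF ?mul0r.
Qed.

Lemma seq_pairing_rV a h d : (size h <= d)%N ->
  seq_pairing a h = (poly_rV h *m \col_(i < d) a i) 0 0.
Proof.
move=> le_h_d; rewrite (seq_pairing_wide _ le_h_d) mxE.
by apply: eq_bigr => i _; rewrite !mxE.
Qed.

Section Annihilated.
Variable P : {poly K}.

Lemma seq_pairing_mul_annihilated a g :
  annihilates P a -> seq_pairing a (g * P) = 0.
Proof.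
elim/poly_ind: g a => [|g c IHg] a Pa; first by rewrite mul0r seq_pairing0.
rewrite mulrDl mul_polyC -mulrA mulrCA seq_pairingD seq_pairingZ.
rewrite seq_pairing_mulX IHg.
  by rewrite add0r -[RHS](mulr0 c) -(Pa 0); congr (_ * _); apply: eq_bigr.
by move=> n; rewrite -(Pa n.+1); apply: eq_bigr => i _; rewrite addSn.
Qed.

Lemma seq_pairing_modp a h :
  annihilates P a -> seq_pairing a h = seq_pairing a (h %% P).
Proof.
move=> Pa; rewrite {1}(divp_eq h P) seq_pairingD.
by rewrite seq_pairing_mul_annihilated ?add0r.
Qed.

End Annihilated.
End SeqPairing.

Lemma rVpolyE (R : nzSemiRingType) d (v : 'rV[R]_d) :
  rVpoly v = \sum_(i < d) v 0 i *: 'X^i.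
Proof.
rewrite /rVpoly poly_def; apply: eq_bigr => i _.
by case: insubP => [j _ /val_inj -> | ] //; rewrite ltn_ord.
Qed.

Section ResidueMatrices.
Variables (K : fieldType) (P : {poly K}).
Hypothesis P0 : P != 0.
Local Notation d := (size P).-1.

Lemma size_modp_leq_pred h : (size (h %% P)%R <= d)%N.
Proof. by rewrite -ltnS prednK ?size_poly_gt0 // ltn_modp. Qed.

Lemma modp_exp h n : ((h %% P) ^+ n) %% P = (h ^+ n) %% P.
Proof.
elim: n => [|n IHn]; first by rewrite !expr0.
by rewrite !exprS -modp_mul IHn modp_mul mulrC modp_mul mulrC.
Qed.

Lemma annihilated_seqE (a : nat -> K) n : annihilates P a ->
  a n = (poly_rV ('X^n %% P) *m \col_(i < d) a i) 0 0.
Proof.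
move=> Pa; rewrite -seq_pairing_rV ?size_modp_leq_pred //.
by rewrite -seq_pairing_modp ?seq_pairing_Xn.
Qed.

Lemma annihilated_seq_eq0 (a : nat -> K) n : annihilates P a ->
  a n = 0 <-> poly_rV ('X^n %% P) *m \col_(i < d) a i = 0.
Proof.
move=> Pa; rewrite (annihilated_seqE _ Pa); split=> [an0 | ->]; last by rewrite mxE.
by rewrite [LHS]mx11_scalar an0 raddf0.
Qed.

Definition mulmod_mx (T : {poly K}) (s : nat) : 'M[K]_d :=
  \matrix_(i < d) poly_rV ((T * 'X^(s * i)) %% P).

Lemma mul_mulmod_mx T s (v : 'rV[K]_d) :
  v *m mulmod_mx T s = poly_rV ((T * (rVpoly v \Po 'X^s)) %% P).
Proof.
rewrite mulmx_sum_row rVpolyE linear_sum mulr_sumr.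
rewrite (big_morph (fun h => h %% P) (modpD P) (mod0p P)) linear_sum.
apply: eq_bigr => i _; rewrite rowK !linearZ /= -scalerAr modpZl linearZ.
by rewrite comp_Xn_poly -exprM mulnC.
Qed.

Lemma mulmod_mx_free (q : nat) (hq : [pchar K].-nat q) T :
  separable_poly P -> coprimep P T -> row_free (mulmod_mx T q).
Proof.
move=> P_sep PT_coprime; apply/inj_row_free => v.
rewrite mul_mulmod_mx; set u := rVpoly v => uP0.
have P_dvd_u : P %| u \Po 'X^q.
  rewrite -(Gauss_dvdpr _ PT_coprime); apply/modp_eq0P.
  by rewrite -[_ %% P](@poly_rV_K _ d) ?size_modp_leq_pred // uP0 linear0.
pose frobP := map_poly (pchar_pow hq) P.
have frobP_sep : separable_poly frobP by rewrite separable_map.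
have /(separable_dvdp_exp frobP_sep) frobP_dvd_u : frobP %| u ^+ q.-1.+1.
  rewrite prednK ?(pchar_pow_gt0 hq) // (pchar_pow_poly hq).
  by rewrite -[X in _ \Po X](map_polyXn (pchar_pow hq)) -map_comp_poly dvdp_map.
suff u0 : u = 0 by rewrite -[v]rVpolyK -/u u0 linear0.
apply: contraTeq frobP_dvd_u => u_neq0; rewrite gtNdvdp // size_map_poly.
have size_u : (size u <= d)%N := size_poly _ _.
by rewrite (leq_ltn_trans size_u) // ltn_predL size_poly_gt0.
Qed.

Lemma mulmod_mx_Xn_step (q : nat) (hq : [pchar K].-nat q) u v c1 c2 :
  (v + c2 = q * u + c1)%N ->
  poly_rV ('X^v %% P) *m mulmod_mx 'X^c2 1 =
    map_mx (pchar_pow hq) (poly_rV ('X^u %% P)) *m mulmod_mx 'X^c1 q.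
Proof.
move=> vu; rewrite !mul_mulmod_mx -map_rVpoly !poly_rV_K ?size_modp_leq_pred //.
congr (poly_rV _); rewrite expr1 comp_polyXr -(pchar_pow_poly hq) modp_mul.
rewrite -[RHS]modp_mul modp_exp modp_mul -exprM -!exprD.
by rewrite addnC vu addnC mulnC.
Qed.

End ResidueMatrices.

Section TwistedOrbit.
Variables (K : fieldType) (f : {rmorphism K -> K}) (d : nat) (D C : 'M[K]_d).
Variable w : nat -> 'rV[K]_d.
Hypotheses (D_free : row_free D) (C_free : row_free C).
Hypothesis wS : forall j, w j.+1 *m D = map_mx f (w j) *m C.

Definition orbit_window j N : 'M[K]_(N, d) := \matrix_(i < N) w (j + i).

Lemma row_orbit_window j N (i : 'I_N) : row i (orbit_window j N) = w (j + i).
Proof. exact: rowK. Qed.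

Lemma mxrank_orbit_window j N : \rank (orbit_window j N) = \rank (orbit_window 0 N).
Proof.
elim: j => // j <-.
have shiftE : orbit_window j.+1 N *m D = map_mx f (orbit_window j N) *m C.
  apply/row_matrixP => i; rewrite !row_mul -map_row !row_orbit_window addSn.
  exact: wS.
by rewrite -(mxrankMfree _ D_free) shiftE mxrankMfree // mxrank_map.
Qed.

Lemma orbit_windowS j N : (orbit_window j N <= orbit_window j N.+1)%MS.
Proof.
apply/row_subP => i; rewrite row_orbit_window.
by rewrite -(row_orbit_window j (widen_ord (leqnSn N) i)) row_sub.
Qed.

Lemma orbit_window_shiftS j N : (orbit_window j.+1 N <= orbit_window j N.+1)%MS.
Proof.
apply/row_subP => i; rewrite row_orbit_window addSn -addnS.
by rewrite -(row_orbit_window j (lift ord0 i)) row_sub.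
Qed.

Lemma orbit_window_rank_stable :
  exists N, \rank (orbit_window 0 N.+1) = \rank (orbit_window 0 N).
Proof.
pose stable (N : 'I_d.+1) := \rank (orbit_window 0 N.+1) == \rank (orbit_window 0 N).
have [N /eqP stableN | unstable] := pickP stable; first by exists (val N).
suff rank_ge M : (M <= d.+1)%N -> (M <= \rank (orbit_window 0 M))%N.
  by have := rank_ge _ (leqnn _); rewrite leqNgt ltnS rank_leq_col.
elim: M => // M IHM lt_M_d; apply: leq_ltn_trans (IHM (ltnW lt_M_d)) _.
rewrite ltn_neqAle mxrankS ?orbit_windowS // andbT eq_sym.
exact: negbT (unstable (Ordinal lt_M_d)).
Qed.

Section StableWindow.
Variable N : nat.
Hypothesis stableN : \rank (orbit_window 0 N.+1) = \rank (orbit_window 0 N).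

Lemma orbit_windowS_sub j : (orbit_window j N.+1 <= orbit_window j N)%MS.
Proof.
have [_ <-] := mxrank_leqif_sup (orbit_windowS j N).
by rewrite !(mxrank_orbit_window j) stableN.
Qed.

Lemma orbit_window_sub_shift j : (orbit_window j N <= orbit_window j.+1 N)%MS.
Proof.
have shift_sub := submx_trans (orbit_window_shiftS j N) (orbit_windowS_sub j).
have [_ <-] := mxrank_leqif_sup shift_sub.
by rewrite (mxrank_orbit_window j.+1) (mxrank_orbit_window j).
Qed.

Lemma orbit_head_sub_window m : (w 0 <= orbit_window m N)%MS.
Proof.
have head_sub : (w 0 <= orbit_window 0 N)%MS.
  apply: submx_trans _ (orbit_windowS_sub 0).
  by have := row_sub ord0 (orbit_window 0 N.+1); rewrite row_orbit_window.
elim: m => // m IHm; exact: submx_trans IHm (orbit_window_sub_shift m).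
Qed.

End StableWindow.

Lemma orbit_eventually_mul0 (l : 'cV[K]_d) m :
  (forall j, (m <= j)%N -> w j *m l = 0) -> w 0 *m l = 0.
Proof.
move=> tail0; have [N stableN] := orbit_window_rank_stable.
have /submxP[x ->] := orbit_head_sub_window stableN m.
rewrite -mulmxA; suff -> : orbit_window m N *m l = 0 by rewrite mulmx0.
by apply/row_matrixP => i; rewrite row_mul row_orbit_window row0 tail0 ?leq_addr.
Qed.

End TwistedOrbit.

Lemma annihilated_seq_eq0_backward (K : fieldType) (a : nat -> K) (P : {poly K})
    (q c1 c2 m : nat) (e : nat -> nat) :
    [pchar K].-nat q -> annihilates P a -> separable_poly P -> coprimep P 'X ->
    (forall j, e j.+1 + c2 = q * e j + c1)%N ->
    (forall j, (m <= j)%N -> a (e j) = 0) ->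
  a (e 0%N) = 0.
Proof.
move=> hq Pa P_sep PX_coprime eS tail0.
have P0 := separable_poly_neq0 P_sep.
have one_nat : [pchar K].-nat 1 by [].
have D_free := mulmod_mx_free P0 one_nat P_sep (coprimep_expr c2 PX_coprime).
have C_free := mulmod_mx_free P0 hq P_sep (coprimep_expr c1 PX_coprime).
have wS j := mulmod_mx_Xn_step P0 hq (eS j).
apply/(annihilated_seq_eq0 P0 _ Pa).
pose w j := poly_rV ('X^(e j) %% P) : 'rV[K]_(size P).-1.
apply: (orbit_eventually_mul0 (w := w) D_free C_free wS).
by move=> j /tail0 /(annihilated_seq_eq0 P0 _ Pa).
Qed.

Section AffinePowers.
Variables (R : numDomainType) (q : nat) (r s : R).

Lemma affine_pow_step n :
  r + s * q%:R ^+ n.+1 = q%:R * (r + s * q%:R ^+ n) + r * (1 - q%:R).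
Proof. by rewrite exprS; ring. Qed.

Lemma affine_pow_recurrence (e : nat -> nat) n :
    (forall j, (e j)%:R = r + s * q%:R ^+ (n + j)) ->
  forall j, (e j.+1 + q * e 0 = q * e j + e 1)%N.
Proof.
move=> eE j; apply/eqP; rewrite -(eqr_nat R); apply/eqP.
rewrite !natrD !natrM !eE.
by rewrite !addnS !affine_pow_step addn0; ring.
Qed.

End AffinePowers.

Lemma affine_pow_nat (F : archiFieldType) (q : nat) (r s : F) (m n : nat) :
    (0 < q)%N ->
    (forall k, (m <= k)%N -> r + s * q%:R ^+ k \is a Num.nat) ->
    r + s * q%:R ^+ n \is a Num.nat ->
  forall j, r + s * q%:R ^+ (n + j) \is a Num.nat.
Proof.
move=> q_gt0 tail_nat xn_nat j.
have q_ge1 : 1 <= q%:R :> F by rewrite ler1n.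
have c_int : r * (1 - q%:R) \is a Num.int.
  have tail_int k : (m <= k)%N -> r + s * q%:R ^+ k \is a Num.int.
    by move/tail_nat/intr_nat.
  rewrite -[_ * _](addKr (q%:R * (r + s * q%:R ^+ m))) -affine_pow_step.
  by rewrite rpredD ?rpredN ?rpredM ?natr_int ?tail_int.
have x_int : r + s * q%:R ^+ (n + j) \is a Num.int.
  elim: j => [|j IHj]; first by rewrite addn0 intr_nat.
  by rewrite addnS affine_pow_step rpredD // rpredM // natr_int.
rewrite natrEint x_int /=; have [s_ge0|s_lt0] := lerP 0 s.
  rewrite -(addn0 n) in xn_nat; apply: le_trans (natr_ge0 xn_nat) _.
  by rewrite lerD2l ler_wpM2l // ler_weXn2l // leq_add2l.
apply: le_trans (natr_ge0 (tail_nat (n + j + m)%N (leq_addl _ _))) _.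
by rewrite lerD2l ler_nM2l // ler_weXn2l // leq_addr.
Qed.

Unset Implicit Arguments.

Theorem lemma8p1 (K : fieldType) (p : nat) (a : nat -> K)
  (hp : p \in [pchar K]) (hrec : recurrence_seq a)
  (hsimple : simple_seq a) (hnondeg : nondegenerate_seq a)
  (q : nat) (hq : exists k : nat, q = (p ^ k)%N) (r s : rat) (m : nat)
  (hzero : forall n : nat, (m <= n)%N ->
     exists t : nat, r + s * (q%:R) ^+ n = t%:R /\ a t = 0) :
  forall (n t : nat), r + s * (q%:R) ^+ n = t%:R -> a t = 0.
Proof.
move=> n t xn_t.
(* [hrec] follows from [hsimple]; nondegeneracy only serves to exclude the
   root 0 of the minimum polynomial. *)
have [P [[P_monic Pa P_min] P_simple]] := hsimple.
have [P' [P'_min P'_nondeg]] := hnondeg.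
have P_nondeg : nondegenerate_roots P.
  by rewrite -(min_poly_unique P'_min (And3 P_monic Pa P_min)).
have hq_nat : [pchar K].-nat q by have [k ->] := hq; exact: pchar_nat_exp.
have tail_nat k : (m <= k)%N -> r + s * q%:R ^+ k \is a Num.nat.
  by case/hzero=> t' [-> _]; exact: natr_nat.
have xn_nat : r + s * q%:R ^+ n \is a Num.nat by rewrite xn_t natr_nat.
have x_nat := affine_pow_nat (pchar_pow_gt0 hq_nat) tail_nat xn_nat.
pose e j := Num.truncn (r + s * q%:R ^+ (n + j)).
have eE j : (e j)%:R = r + s * q%:R ^+ (n + j) by rewrite truncnK.
have <- : e 0%N = t by rewrite /e addn0 xn_t natrK.
apply: (annihilated_seq_eq0_backward hq_nat Pa _ _ (affine_pow_recurrence eE)).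
- exact: separable_of_distinct_roots.
- exact: nondegenerate_coprimepX.
- move=> j le_m_j.
  have [t' [xt' at'0]] := hzero (n + j)%N (leq_trans le_m_j (leq_addl _ _)).
  by rewrite /e xt' natrK.
Qed.
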